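(* Let $K\neq0$ and let $(\mathcal M,\rho)$ be a metric space such that $\operatorname{diam}(\mathcal M)\le\pi/(2\sqrt K)$ when $K>0$, satisfying the one-sided four point $\operatorname{cosq}_K$ condition. Let $\mathcal L$ be a shortest joining $A$ to $B$ and let $(\mathcal L_n)_{n\ge1}$ be shortests joining $A_n$ to $B_n$, with $A_n\to A$ and $B_n\to B$. Let $\mathfrak g_r$ be the reduced parametrization of $\mathcal L$ relative to $A$ and $\mathfrak g_{r,n}$ that of $\mathcal L_n$ relative to $A_n$. Then $\mathfrak g_{r,n}\to\mathfrak g_r$ uniformly on $[0,1]$.
   Context: A shortest joining $P$ to $Q$ is a rectifiable curve from $P$ to $Q$ of length $\rho(P,Q)$. If $\mathcal L$ is a shortest of length $l$ from $A$, its reduced parametrization relative to $A$ is $\mathfrak g_r:[0,1]\to\mathcal M$, $\mathfrak g_r(t)=$ the point of $\mathcal L$ such that the arc of $\mathcal L$ from $A$ to it has length $tl$. Let $\kappa=\sqrt{|K|}$. For $A\neq P$, $B\neq Q$ (with $\rho(A,P),\rho(B,Q),\rho(A,B)<\pi/\sqrt K$ if $K>0$) put $x=\rho(A,P)$, $y=\rho(B,Q)$, $a=\rho(A,B)$, $b=\rho(P,Q)$, $d=\rho(P,B)$, $f=\rho(A,Q)$; for $K>0$ $$\operatorname{cosq}_K(\overrightarrow{AP},\overrightarrow{BQ})=\frac{\cos\kappa b+\cos\kappa x\cos\kappa y}{\sin\kappa x\sin\kappa y}-\frac{(\cos\kappa x+\cos\kappa d)(\cos\kappa y+\cos\kappa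 f)}{(1+\cos\kappa a)\sin\kappa x\sin\kappa y},$$ and for $K<0$ $$\operatorname{cosq}_K(\overrightarrow{AP},\overrightarrow{BQ})=\frac{(\cosh\kappa x+\cosh\kappa d)(\cosh\kappa y+\cosh\kappa f)}{(1+\cosh\kappa a)\sinh\kappa x\sinh\kappa y}-\frac{\cosh\kappa b+\cosh\kappa x\cosh\kappa y}{\sinh\kappa x\sinh\kappa y}.$$ Upper/lower four point $\operatorname{cosq}_K$ condition: $\operatorname{cosq}_K\le1$ / $\ge-1$ for all such quadruples; one-sided: at least one of the two holds. *)

From Stdlib Require Import Reals.
Open Scope R_scope.

Definition is_metric {M : Type} (rho : M -> M -> R) : Prop :=
  (forall x y, 0 <= rho x y) /\
  (forall x y, rho x y = 0 <-> x = y) /\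
  (forall x y, rho x y = rho y x) /\
  (forall x y z, rho x z <= rho x y + rho y z).

Definition conv_to {M : Type} (rho : M -> M -> R) (u : nat -> M) (l : M) : Prop :=
  forall eps, 0 < eps -> exists N, forall n, (N <= n)%nat -> rho (u n) l < eps.

Definition is_curve {M : Type} (rho : M -> M -> R) (g : R -> M) : Prop :=
  forall t, 0 <= t <= 1 -> forall eps, 0 < eps -> exists delta, 0 < delta /\
    forall s, 0 <= s <= 1 -> Rabs (s - t) < delta -> rho (g s) (g t) < eps.

Fixpoint poly_sum {M : Type} (rho : M -> M -> R) (g : R -> M) (p : nat -> R) (n : nat) : R :=
  match n with
  | O => 0
  | S k => poly_sum rho g p k + rho (g (p k)) (g (p (S k)))
  end.

Definition is_partition (a b : R) (p : nat -> R) (n : nat) : Prop :=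
  p O = a /\ p n = b /\ forall i, (i < n)%nat -> p i <= p (S i).

(** [L] is the length of the restriction of [g] to [a,b] (supremum of
    inscribed polygonal lengths); the curve is rectifiable there iff such
    an [L] exists. *)
Definition curve_length {M : Type} (rho : M -> M -> R) (g : R -> M) (a b L : R) : Prop :=
  is_lub (fun S => exists p n, is_partition a b p n /\ S = poly_sum rho g p n) L.

Definition is_shortest {M : Type} (rho : M -> M -> R) (g : R -> M) (P Q : M) : Prop :=
  is_curve rho g /\ g 0 = P /\ g 1 = Q /\ curve_length rho g 0 1 (rho P Q).

Definition is_reduced_param {M : Type} (rho : M -> M -> R) (g gr : R -> M) : Prop :=
  forall t, 0 <= t <= 1 ->
    exists s, 0 <= s <= 1 /\ curve_length rho g 0 s (t * rho (g 0) (g 1)) /\ gr t = g s.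

Definition cosq {M : Type} (rho : M -> M -> R) (K : R) (A P B Q : M) : R :=
  let k := sqrt (Rabs K) in
  let x := rho A P in let y := rho B Q in let a := rho A B in
  let b := rho P Q in let d := rho P B in let f := rho A Q in
  if Rlt_dec 0 K then
    (cos (k*b) + cos (k*x) * cos (k*y)) / (sin (k*x) * sin (k*y))
    - (cos (k*x) + cos (k*d)) * (cos (k*y) + cos (k*f))
      / ((1 + cos (k*a)) * sin (k*x) * sin (k*y))
  else
    (cosh (k*x) + cosh (k*d)) * (cosh (k*y) + cosh (k*f))
      / ((1 + cosh (k*a)) * sinh (k*x) * sinh (k*y))
    - (cosh (k*b) + cosh (k*x) * cosh (k*y)) / (sinh (k*x) * sinh (k*y)).

Definition admissible {M : Type} (rho : M -> M -> R) (K : R) (A P B Q : M) : Prop :=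
  A <> P /\ B <> Q /\
  (0 < K -> rho A P < PI / sqrt K /\ rho B Q < PI / sqrt K /\ rho A B < PI / sqrt K).

Definition upper_cosq {M : Type} (rho : M -> M -> R) (K : R) : Prop :=
  forall A P B Q, admissible rho K A P B Q -> cosq rho K A P B Q <= 1.

Definition lower_cosq {M : Type} (rho : M -> M -> R) (K : R) : Prop :=
  forall A P B Q, admissible rho K A P B Q -> -1 <= cosq rho K A P B Q.

Definition one_sided_cosq {M : Type} (rho : M -> M -> R) (K : R) : Prop :=
  upper_cosq rho K \/ lower_cosq rho K.

(* Put P = gr t and Q = grn n t.  Both are at the fraction t of their segments:
   rho A P = t |AB|, rho P B = (1-t) |AB|, and likewise for Q on A_n B_n.  Write
   h u = cos (kappa u) for K > 0 and h u = cosh (kappa u) for K < 0.  Multiplying out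
   the denominator, cosq_K <= 1 for the quadruple (A, P, Q, B_n), resp. cosq_K >= -1
   for (A, P, B_n, Q), is a sign condition on a polynomial in h of six distances.
   If A_n = A and B_n = B these distances take model values at which the polynomial
   factors as (1 - h (rho P Q)) times a factor bounded away from 0 (for the upper
   condition once t >= 1/2, which costs nothing after reversing both segments), so
   the sign condition forces rho P Q = 0.  Since h is Lipschitz on bounded sets,
   moving the endpoints perturbs the polynomial by O(rho A A_n + rho B B_n), hence
   |1 - h (rho P Q)| = O(rho A A_n + rho B B_n) uniformly in t. *)

From Stdlib Require Import Reals Lra Lia Classical.
Open Scope R_scope.

Definition at_fraction {M : Type} (rho : M -> M -> R) (A B : M) (t : R) (P : M) : Prop :=
  rho A P = t * rho A B /\ rho P B = (1 - t) * rho A B.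

Lemma poly_sum_ext {M : Type} (rho : M -> M -> R) (g : R -> M) (p q : nat -> R) (n : nat) :
  (forall i, (i <= n)%nat -> p i = q i) -> poly_sum rho g p n = poly_sum rho g q n.
Proof.
  induction n as [|n IH]; intros Hpq; simpl; [reflexivity|].
  rewrite IH, (Hpq n), (Hpq (S n)); auto.
Qed.

Lemma curve_length_chord_le {M : Type} (rho : M -> M -> R) (g : R -> M) (a b L : R) :
  a <= b -> curve_length rho g a b L -> rho (g a) (g b) <= L.
Proof.
  intros Hab [Hub _]. apply Hub.
  exists (fun i => match i with O => a | _ => b end), 1%nat. split.
  - repeat split; intros [|i] Hi; lia || lra.
  - simpl. ring.
Qed.

Lemma curve_length_extend_le {M : Type} (rho : M -> M -> R) (g : R -> M) (a s b l L : R) :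
  s <= b -> curve_length rho g a s l -> curve_length rho g a b L ->
  l + rho (g s) (g b) <= L.
Proof.
  intros Hsb [_ Hleast] [Hub _].
  enough (Hbound : is_upper_bound (fun S => exists p n, is_partition a s p n /\ S = poly_sum rho g p n)
                                  (L - rho (g s) (g b))) by (specialize (Hleast _ Hbound); lra).
  intros S (p & n & (Hp0 & Hpn & Hmono) & ->).
  set (p' i := if (i <=? n)%nat then p i else b).
  assert (Hp' : forall i, (i <= n)%nat -> p' i = p i)
    by (intros i Hi; unfold p'; now rewrite (proj2 (Nat.leb_le i n) Hi)).
  assert (Hlast : p' (S n) = b) by (unfold p'; now rewrite (proj2 (Nat.leb_gt (S n) n) (Nat.lt_succ_diag_r n))).
  assert (Hext : poly_sum rho g p' (S n) <= L).
  { apply Hub. exists p', (S n). repeat split.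
    - rewrite Hp'; [exact Hp0 | lia].
    - exact Hlast.
    - intros i Hi. destruct (Nat.eq_dec i n) as [->|Hne].
      + rewrite Hlast, Hp', Hpn; lia || lra.
      + rewrite !Hp' by lia. apply Hmono. lia. }
  simpl in Hext. rewrite (poly_sum_ext rho g p' p n Hp'), Hp', Hpn, Hlast in Hext by lia. lra.
Qed.

Lemma reduced_param_at_fraction {M : Type} (rho : M -> M -> R) (g gr : R -> M) (A B : M) (t : R) :
  is_metric rho -> is_shortest rho g A B -> is_reduced_param rho g gr -> 0 <= t <= 1 ->
  at_fraction rho A B t (gr t).
Proof.
  intros (_ & _ & _ & Htri) (_ & Hg0 & Hg1 & Hlen) Hgr Ht.
  destruct (Hgr t Ht) as (s & Hs & Hls & ->).
  rewrite Hg0, Hg1 in Hls.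
  pose proof (curve_length_chord_le rho g 0 s _ (proj1 Hs) Hls) as Hchord.
  pose proof (curve_length_extend_le rho g 0 s 1 _ _ (proj2 Hs) Hls Hlen) as Hrest.
  rewrite Hg0 in Hchord. rewrite Hg1 in Hrest.
  pose proof (Htri A (g s) B). unfold at_fraction. split; lra.
Qed.

Lemma at_fraction_sym {M : Type} (rho : M -> M -> R) (A B P : M) (t : R) :
  is_metric rho -> at_fraction rho A B t P -> at_fraction rho B A (1 - t) P.
Proof.
  intros (_ & _ & Hsym & _) [HAP HPB]. unfold at_fraction.
  rewrite !(Hsym B), (Hsym P A), HAP, HPB. split; ring.
Qed.

Lemma at_fraction_deviation {M : Type} (rho : M -> M -> R) (A B A' B' P Q : M) (t e : R) :
  is_metric rho -> 0 <= t <= 1 ->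
  at_fraction rho A B t P -> at_fraction rho A' B' t Q -> rho A A' + rho B B' <= e ->
  Rabs (rho A Q - t * rho A B) <= 2 * e /\
  Rabs (rho P B' - (1 - t) * rho A' B') <= 2 * e /\
  Rabs (rho A B' - (t * rho A B + (1 - t) * rho A' B')) <= 2 * e.
Proof.
  intros (Hpos & _ & Hsym & Htri) Ht [HAP HPB] [HAQ HQB] He.
  assert (HL : - e <= rho A B - rho A' B' <= e).
  { pose proof (Htri A A' B). pose proof (Htri A' B' B). pose proof (Htri A' A B').
    pose proof (Htri A B B'). rewrite (Hsym A' A), (Hsym B' B) in *. split; lra. }
  pose proof (Hpos A A'). pose proof (Hpos B B').
  pose proof (Htri A A' Q). pose proof (Htri A' A Q). pose proof (Htri P B B').
  pose proof (Htri P B' B). pose proof (Htri A B B'). pose proof (Htri A B' B).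
  rewrite (Hsym A' A), (Hsym B' B) in *.
  repeat split; apply Rabs_le; split; nra.
Qed.

Lemma exp_le (u v : R) : u <= v -> exp u <= exp v.
Proof. intros [Huv | ->]; [left; apply exp_increasing |]; lra. Qed.

Lemma cosh_opp (u : R) : cosh (- u) = cosh u.
Proof. unfold cosh. rewrite Ropp_involutive. field. Qed.

Lemma cosh_add (u v : R) : cosh (u + v) = cosh u * cosh v + sinh u * sinh v.
Proof. unfold cosh, sinh. rewrite Ropp_plus_distr, !exp_plus. field. Qed.

Lemma cosh_sub (u v : R) : cosh (u - v) = cosh u * cosh v - sinh u * sinh v.
Proof. unfold cosh, sinh, Rminus. rewrite Ropp_plus_distr, Ropp_involutive, !exp_plus. field. Qed.

Lemma cosh_sqr_sub_sinh_sqr (u : R) : cosh u ^ 2 - sinh u ^ 2 = 1.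
Proof.
  assert (exp u * exp (- u) = 1) by (rewrite <- exp_plus, Rplus_opp_r; apply exp_0).
  unfold cosh, sinh. lra.
Qed.

Lemma cosh_ge_1 (u : R) : 1 <= cosh u.
Proof. unfold cosh. pose proof (exp_ineq1_le u). pose proof (exp_ineq1_le (- u)). lra. Qed.

Lemma cosh_le_exp_abs (u : R) : cosh u <= exp (Rabs u).
Proof.
  unfold cosh. pose proof (exp_le u (Rabs u) (Rle_abs u)).
  pose proof (exp_le (- u) (Rabs u) (Rle_trans _ _ _ (Rle_abs (- u)) (Req_le _ _ (Rabs_Ropp u)))).
  lra.
Qed.

Lemma Rabs_sinh_le_exp_abs (u : R) : Rabs (sinh u) <= exp (Rabs u).
Proof.
  unfold sinh. pose proof (exp_pos u). pose proof (exp_pos (- u)).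
  pose proof (cosh_le_exp_abs u). unfold cosh in *. apply Rabs_le. split; lra.
Qed.

Lemma cosh_lt (u v : R) : 0 <= u < v -> cosh u < cosh v.
Proof.
  intros [Hu Huv].
  destruct (MVT_cor2 cosh sinh u v Huv) as (c & Hc & Huc & _).
  { intros c _. apply derivable_pt_lim_cosh. }
  pose proof (sinh_lt 0 c ltac:(lra)). rewrite sinh_0 in *. nra.
Qed.

Lemma Rabs_le_inv (x r : R) : Rabs x <= r -> - r <= x <= r.
Proof. unfold Rabs. destruct Rcase_abs; lra. Qed.

Lemma Rabs_cos_sub_le (a b : R) : Rabs (cos a - cos b) <= Rabs (a - b).
Proof.
  destruct (MVT_abs cos (fun c => - sin c) b a) as (c & -> & _).
  { intros c _. apply derivable_pt_lim_cos. }
  rewrite Rabs_Ropp. pose proof (Rabs_pos (a - b)).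
  assert (Rabs (sin c) <= 1) by (apply Rabs_le; pose proof (SIN_bound c); lra).
  nra.
Qed.

Lemma Rabs_cosh_sub_le (r a b : R) :
  Rabs a <= r -> Rabs b <= r -> Rabs (cosh a - cosh b) <= exp r * Rabs (a - b).
Proof.
  intros Ha Hb.
  destruct (MVT_abs cosh sinh b a) as (c & -> & Hc).
  { intros c _. apply derivable_pt_lim_cosh. }
  assert (Hcr : Rabs c <= r).
  { apply Rabs_le_inv in Ha, Hb. apply Rabs_le.
    unfold Rmin, Rmax in Hc. destruct Rle_dec; lra. }
  pose proof (Rabs_sinh_le_exp_abs c). pose proof (exp_le _ _ Hcr). pose proof (Rabs_pos (a - b)).
  apply Rmult_le_compat_r; lra.
Qed.

(* Cosine and sine of the model plane of curvature K.  For both signs of K, [cosq]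
   is [sgnK K] times the same expression in [cosK] and [sinK]. *)
Definition sgnK (K : R) : R := if Rlt_dec 0 K then 1 else -1.

Definition cosK (K u : R) : R :=
  if Rlt_dec 0 K then cos (sqrt (Rabs K) * u) else cosh (sqrt (Rabs K) * u).

Definition sinK (K u : R) : R :=
  if Rlt_dec 0 K then sin (sqrt (Rabs K) * u) else sinh (sqrt (Rabs K) * u).

Definition versK (K u : R) : R := sgnK K * (1 - cosK K u).

Section ModelTrigonometry.

Variable K : R.
Local Notation kappa := (sqrt (Rabs K)).

Lemma sgnK_sqr : sgnK K * sgnK K = 1.
Proof. unfold sgnK. destruct Rlt_dec; ring. Qed.

Lemma cosK_0 : cosK K 0 = 1.
Proof. unfold cosK. rewrite Rmult_0_r. destruct Rlt_dec; [apply cos_0 | apply cosh_0]. Qed.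

Lemma cosK_opp (u : R) : cosK K (- u) = cosK K u.
Proof.
  unfold cosK. rewrite <- Ropp_mult_distr_r. destruct Rlt_dec; [apply cos_neg | apply cosh_opp].
Qed.

Lemma cosK_add (u v : R) : cosK K (u + v) = cosK K u * cosK K v - sgnK K * (sinK K u * sinK K v).
Proof.
  unfold cosK, sinK, sgnK. rewrite Rmult_plus_distr_l.
  destruct Rlt_dec; [rewrite cos_plus | rewrite cosh_add]; ring.
Qed.

Lemma cosK_sub (u v : R) : cosK K (u - v) = cosK K u * cosK K v + sgnK K * (sinK K u * sinK K v).
Proof.
  unfold cosK, sinK, sgnK. rewrite Rmult_minus_distr_l.
  destruct Rlt_dec; [rewrite cos_minus | rewrite cosh_sub]; ring.
Qed.

Lemma sinK_sqr (u : R) : sinK K u ^ 2 = sgnK K * (1 - cosK K u ^ 2).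
Proof.
  unfold cosK, sinK, sgnK. destruct Rlt_dec.
  - pose proof (sin2 (kappa * u)). unfold Rsqr in *. lra.
  - pose proof (cosh_sqr_sub_sinh_sqr (kappa * u)). lra.
Qed.

Lemma cosK_sub_add_sum (u v : R) : cosK K (u - v) + cosK K (u + v) = 2 * cosK K u * cosK K v.
Proof. rewrite cosK_sub, cosK_add. ring. Qed.

Lemma cosK_sub_add_mul (u v : R) :
  cosK K (u - v) * cosK K (u + v) = cosK K u ^ 2 + cosK K v ^ 2 - 1.
Proof.
  rewrite cosK_sub, cosK_add.
  transitivity (cosK K u ^ 2 * cosK K v ^ 2 - (sgnK K * sgnK K) * (sinK K u ^ 2 * sinK K v ^ 2)); [ring|].
  rewrite !sinK_sqr. transitivity (cosK K u ^ 2 * cosK K v ^ 2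
    - (sgnK K * sgnK K) ^ 2 * ((1 - cosK K u ^ 2) * (1 - cosK K v ^ 2))); [ring|].
  rewrite sgnK_sqr. ring.
Qed.

Lemma Rabs_cosK_le (r u : R) : Rabs u <= r -> Rabs (cosK K u) <= exp (kappa * r).
Proof.
  intros Hu. pose proof (sqrt_pos (Rabs K)) as Hk.
  assert (Hku : Rabs (kappa * u) <= kappa * r)
    by (rewrite Rabs_mult, (Rabs_pos_eq kappa Hk); apply Rmult_le_compat_l; lra).
  unfold cosK. destruct Rlt_dec.
  - pose proof (exp_ineq1_le (kappa * r)). pose proof (Rabs_pos u).
    assert (Rabs (cos (kappa * u)) <= 1) by (apply Rabs_le; pose proof (COS_bound (kappa * u)); lra).
    nra.
  - rewrite Rabs_pos_eq by (pose proof (cosh_ge_1 (kappa * u)); lra).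
    eapply Rle_trans; [apply cosh_le_exp_abs | apply exp_le, Hku].
Qed.

Lemma Rabs_cosK_sub_le (r u v : R) : Rabs u <= r -> Rabs v <= r ->
  Rabs (cosK K u - cosK K v) <= kappa * exp (kappa * r) * Rabs (u - v).
Proof.
  intros Hu Hv. pose proof (sqrt_pos (Rabs K)) as Hk.
  assert (Hscale : forall w, Rabs w <= r -> Rabs (kappa * w) <= kappa * r)
    by (intros w Hw; rewrite Rabs_mult, (Rabs_pos_eq kappa Hk); apply Rmult_le_compat_l; lra).
  assert (Hdiff : Rabs (kappa * u - kappa * v) = kappa * Rabs (u - v))
    by (rewrite <- Rmult_minus_distr_l, Rabs_mult, (Rabs_pos_eq kappa Hk); reflexivity).
  pose proof (Rabs_pos (u - v)).
  unfold cosK. destruct Rlt_dec.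
  - eapply Rle_trans; [apply Rabs_cos_sub_le|]. rewrite Hdiff.
    assert (1 <= exp (kappa * r))
      by (pose proof (exp_ineq1_le (kappa * r)); pose proof (Rabs_pos u); nra).
    assert (0 <= kappa * Rabs (u - v)) by nra. nra.
  - eapply Rle_trans; [apply Rabs_cosh_sub_le; apply Hscale; eassumption|]. rewrite Hdiff. lra.
Qed.

Lemma sgnK_mul_le_Rabs (u : R) : sgnK K * u <= Rabs u.
Proof.
  unfold sgnK. destruct Rlt_dec.
  - rewrite Rmult_1_l. apply Rle_abs.
  - rewrite <- Rabs_Ropp. replace (-1 * u) with (- u) by ring. apply Rle_abs.
Qed.

Lemma one_add_cosK_pos (u : R) : 0 <= u -> (0 < K -> kappa * u < PI) -> 0 < 1 + cosK K u.
Proof.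
  intros Hu Hpi. pose proof (sqrt_pos (Rabs K)). unfold cosK. destruct Rlt_dec as [HK|HK].
  - pose proof (cos_decreasing_1 (kappa * u) PI). pose proof PI_RGT_0. rewrite cos_PI in *. nra.
  - pose proof (cosh_ge_1 (kappa * u)). lra.
Qed.

Lemma cosK_ge_half (u : R) : 0 <= u -> (0 < K -> kappa * u <= PI / 3) -> 1 / 2 <= cosK K u.
Proof.
  intros Hu Hpi. pose proof (sqrt_pos (Rabs K)). unfold cosK. destruct Rlt_dec as [HK|HK].
  - rewrite <- cos_PI3. pose proof PI_RGT_0. apply cos_decr_1; nra.
  - pose proof (cosh_ge_1 (kappa * u)). lra.
Qed.

Lemma cosK_nonneg (u : R) : 0 <= u -> (0 < K -> kappa * u <= PI / 2) -> 0 <= cosK K u.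
Proof.
  intros Hu Hpi. pose proof (sqrt_pos (Rabs K)). unfold cosK. destruct Rlt_dec as [HK|HK].
  - pose proof PI_RGT_0. apply cos_ge_0; nra.
  - pose proof (cosh_ge_1 (kappa * u)). lra.
Qed.

Lemma versK_0 : versK K 0 = 0.
Proof. unfold versK. rewrite cosK_0. ring. Qed.

Lemma versK_nonneg (u : R) : 0 <= versK K u.
Proof.
  unfold versK, sgnK, cosK. destruct Rlt_dec.
  - pose proof (COS_bound (kappa * u)). lra.
  - pose proof (cosh_ge_1 (kappa * u)). lra.
Qed.

Hypothesis K_neq0 : K <> 0.

Lemma kappa_pos : 0 < kappa.
Proof. apply sqrt_lt_R0, Rabs_pos_lt, K_neq0. Qed.

Lemma sinK_pos (u : R) : 0 < u -> (0 < K -> kappa * u < PI) -> 0 < sinK K u.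
Proof.
  intros Hu Hpi. pose proof kappa_pos. unfold sinK. destruct Rlt_dec as [HK|HK].
  - apply sin_gt_0; nra.
  - rewrite <- sinh_0. apply sinh_lt. nra.
Qed.

Lemma versK_lt (u v : R) : 0 <= u < v -> (0 < K -> kappa * v <= PI) -> versK K u < versK K v.
Proof.
  intros Huv Hpi. pose proof kappa_pos. unfold versK, sgnK, cosK. destruct Rlt_dec as [HK|HK].
  - pose proof (cos_decreasing_1 (kappa * u) (kappa * v)). nra.
  - pose proof (cosh_lt (kappa * u) (kappa * v)). nra.
Qed.

Lemma versK_lt_inv (u v : R) : 0 <= u -> 0 <= v -> (0 < K -> kappa * u <= PI) ->
  versK K u < versK K v -> u < v.
Proof.
  intros Hu Hv Hpi Hlt. destruct (Rlt_le_dec u v) as [|[Hvu | ->]]; [assumption | |lra].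
  pose proof (versK_lt v u (conj Hv Hvu) Hpi). lra.
Qed.

Lemma versK_small_inv (eps : R) : 0 < eps -> exists eta, 0 < eta /\
  forall u, 0 <= u -> (0 < K -> kappa * u <= PI) -> versK K u < eta -> u < eps.
Proof.
  intros Heps. pose proof kappa_pos. pose proof PI_RGT_0.
  set (eps' := Rmin eps (PI / kappa)).
  assert (Heps' : 0 < eps') by (apply Rmin_glb_lt; [|apply Rdiv_lt_0_compat]; lra).
  assert (Hpi : kappa * eps' <= PI).
  { apply Rle_trans with (kappa * (PI / kappa)); [|right; field; lra].
    apply Rmult_le_compat_l; [lra | apply Rmin_r]. }
  exists (versK K eps'). split.
  - rewrite <- versK_0. apply versK_lt; auto. lra.
  - intros u Hu Hupi Hlt. pose proof (Rmin_l eps (PI / kappa)).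
    enough (u < eps') by (unfold eps' in *; lra).
    apply versK_lt_inv; auto. lra.
Qed.

End ModelTrigonometry.

(* For h = cosK K and s = x + y (resp. x - y), [sgnK K * quad_defect] is the
   numerator of cosq_K - 1 (resp. cosq_K + 1). *)
Definition quad_defect (h : R -> R) (s x y a b d f : R) : R :=
  (h b + h s) * (1 + h a) - (h x + h d) * (h y + h f).

Lemma Rabs_mult_le (u v U V : R) : Rabs u <= U -> Rabs v <= V -> Rabs (u * v) <= U * V.
Proof. intros. rewrite Rabs_mult. apply Rmult_le_compat; auto using Rabs_pos. Qed.

Lemma Rabs_add_le (u v U V : R) : Rabs u <= U -> Rabs v <= V -> Rabs (u + v) <= U + V.
Proof. intros. pose proof (Rabs_triang u v). lra. Qed.

Lemma quad_defect_perturb (h : R -> R) (s x y a b d f a' b' d' f' H m : R) :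
  1 <= H -> Rabs (h s) <= H -> Rabs (h x) <= H -> Rabs (h y) <= H -> Rabs (h a) <= H ->
  Rabs (h b') <= H -> Rabs (h d') <= H -> Rabs (h f) <= H ->
  Rabs (h a - h a') <= m -> Rabs (h b - h b') <= m ->
  Rabs (h d - h d') <= m -> Rabs (h f - h f') <= m ->
  Rabs (quad_defect h s x y a b d f - quad_defect h s x y a' b' d' f') <= 8 * H * m.
Proof.
  intros H1 Hs Hx Hy Ha Hb' Hd' Hf Ea Eb Ed Ef.
  replace (quad_defect h s x y a b d f - quad_defect h s x y a' b' d' f')
    with ((h b - h b') * (1 + h a) + (h b' + h s) * (h a - h a')
          + ((h d - h d') * - (h y + h f) + (h f - h f') * - (h x + h d')))
    by (unfold quad_defect; ring).
  assert (H2 : forall u v, Rabs u <= H -> Rabs v <= H -> Rabs (u + v) <= 2 * H)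
    by (intros; replace (2 * H) with (H + H) by ring; apply Rabs_add_le; assumption).
  assert (H1a : Rabs (1 + h a) <= 2 * H) by (apply H2; [rewrite Rabs_R1|]; assumption).
  replace (8 * H * m) with (m * (2 * H) + 2 * H * m + (m * (2 * H) + m * (2 * H))) by ring.
  repeat apply Rabs_add_le; apply Rabs_mult_le; try rewrite Rabs_Ropp; auto.
Qed.

Lemma quad_defect_upper_model (h : R -> R) (x y d : R) :
  quad_defect h (x + y) x y x y d (x + y) = (1 - h d) * (h y + h (x + y)).
Proof. unfold quad_defect. ring. Qed.

Lemma quad_defect_lower_model (h : R -> R) (x y b : R) :
  h (x - y) + h (x + y) = 2 * h x * h y ->
  h (x - y) * h (x + y) = h x ^ 2 + h y ^ 2 - 1 ->
  quad_defect h (x - y) x y (x + y) b y x = (h b - 1) * (1 + h (x + y)).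
Proof.
  intros Hsum Hprod. unfold quad_defect.
  transitivity ((h b - 1) * (1 + h (x + y)) + (h (x - y) + h (x + y) - 2 * h x * h y)
    + (h (x - y) * h (x + y) - (h x ^ 2 + h y ^ 2 - 1))); [ring|].
  rewrite Hsum, Hprod. ring.
Qed.

Section FourPointCondition.

Variables (M : Type) (rho : M -> M -> R) (K : R).
Hypothesis rho_metric : is_metric rho.
Hypothesis diam_bound : 0 < K -> forall x y : M, rho x y <= PI / (2 * sqrt K).
Local Notation kappa := (sqrt (Rabs K)).

Lemma metric_self (x : M) : rho x x = 0.
Proof. apply (proj1 (proj2 rho_metric)). reflexivity. Qed.

Lemma metric_sym (x y : M) : rho x y = rho y x.
Proof. apply rho_metric. Qed.

Lemma metric_pos_of_neq (x y : M) : x <> y -> 0 < rho x y.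
Proof.
  intros Hxy. destruct rho_metric as (Hpos & Hsep & _).
  destruct (Hpos x y) as [|Hxy0]; [assumption|]. exfalso. apply Hxy, Hsep. auto.
Qed.

Lemma kappa_dist_le (x y : M) : 0 < K -> kappa * rho x y <= PI / 2.
Proof.
  intros HK. rewrite Rabs_pos_eq by lra. pose proof (sqrt_lt_R0 K HK).
  replace (PI / 2) with (sqrt K * (PI / (2 * sqrt K))) by (field; lra).
  apply Rmult_le_compat_l; [lra | apply diam_bound, HK].
Qed.

Lemma kappa_dist_lt_PI (x y : M) : 0 < K -> kappa * rho x y < PI.
Proof. intros HK. pose proof (kappa_dist_le x y HK). pose proof PI_RGT_0. lra. Qed.

Hypothesis K_neq0 : K <> 0.

Lemma admissible_of_neq (A P B Q : M) : A <> P -> B <> Q -> admissible rho K A P B Q.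
Proof.
  intros HAP HBQ. repeat split; try assumption;
  (apply (Rmult_lt_reg_l (sqrt K)); [apply sqrt_lt_R0; lra|];
   replace (sqrt K * (PI / sqrt K)) with PI by (field; apply Rgt_not_eq, sqrt_lt_R0; lra);
   rewrite <- (Rabs_pos_eq K) at 1 by lra; apply kappa_dist_lt_PI; lra).
Qed.

Lemma quad_denominator_pos (A P B Q : M) : A <> P -> B <> Q ->
  0 < 1 + cosK K (rho A B) /\ 0 < sinK K (rho A P) /\ 0 < sinK K (rho B Q).
Proof.
  intros HAP HBQ. pose proof (proj1 rho_metric A B).
  repeat split; [apply one_add_cosK_pos | apply sinK_pos | apply sinK_pos];
    auto using metric_pos_of_neq, kappa_dist_lt_PI.
Qed.

Lemma cosq_quad_defect_add (A P B Q : M) :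
  1 + cosK K (rho A B) <> 0 -> sinK K (rho A P) <> 0 -> sinK K (rho B Q) <> 0 ->
  cosq rho K A P B Q = 1 + sgnK K *
    quad_defect (cosK K) (rho A P + rho B Q) (rho A P) (rho B Q) (rho A B) (rho P Q) (rho P B) (rho A Q)
    / ((1 + cosK K (rho A B)) * sinK K (rho A P) * sinK K (rho B Q)).
Proof.
  unfold cosq, quad_defect, cosK, sinK, sgnK. cbv zeta. rewrite (Rmult_plus_distr_l (sqrt (Rabs K)) (rho A P)).
  destruct (Rlt_dec 0 K); [rewrite cos_plus | rewrite cosh_add]; intros; field; auto.
Qed.

Lemma cosq_quad_defect_sub (A P B Q : M) :
  1 + cosK K (rho A B) <> 0 -> sinK K (rho A P) <> 0 -> sinK K (rho B Q) <> 0 ->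
  cosq rho K A P B Q = sgnK K *
    quad_defect (cosK K) (rho A P - rho B Q) (rho A P) (rho B Q) (rho A B) (rho P Q) (rho P B) (rho A Q)
    / ((1 + cosK K (rho A B)) * sinK K (rho A P) * sinK K (rho B Q)) - 1.
Proof.
  unfold cosq, quad_defect, cosK, sinK, sgnK. cbv zeta. rewrite (Rmult_minus_distr_l (sqrt (Rabs K)) (rho A P)).
  destruct (Rlt_dec 0 K); [rewrite cos_minus | rewrite cosh_sub]; intros; field; auto.
Qed.

(* On degenerate quadruples (A = P or B = Q) both defects vanish identically. *)
Lemma upper_cosq_quad_defect (A P B Q : M) : upper_cosq rho K ->
  sgnK K * quad_defect (cosK K) (rho A P + rho B Q) (rho A P) (rho B Q)
                       (rho A B) (rho P Q) (rho P B) (rho A Q) <= 0.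
Proof.
  intros Hup.
  destruct (classic (A = P)) as [<- | HAP].
  { unfold quad_defect. rewrite metric_self, Rplus_0_l, cosK_0. ring_simplify. lra. }
  destruct (classic (B = Q)) as [<- | HBQ].
  { unfold quad_defect. rewrite metric_self, Rplus_0_r, cosK_0. ring_simplify. lra. }
  destruct (quad_denominator_pos A P B Q HAP HBQ) as (Ha & Hx & Hy).
  specialize (Hup A P B Q (admissible_of_neq A P B Q HAP HBQ)).
  rewrite cosq_quad_defect_add in Hup by lra.
  set (u := sgnK K * _) in *. set (D := _ * _ * _) in *.
  assert (0 < D) by (unfold D; repeat apply Rmult_lt_0_compat; assumption).
  assert (u = u / D * D) by (field; lra). nra.
Qed.

Lemma lower_cosq_quad_defect (A P B Q : M) : lower_cosq rho K ->
  0 <= sgnK K * quad_defect (cosK K) (rho A P - rho B Q) (rho A P) (rho B Q)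
                            (rho A B) (rho P Q) (rho P B) (rho A Q).
Proof.
  intros Hlo.
  destruct (classic (A = P)) as [<- | HAP].
  { unfold quad_defect. rewrite metric_self, Rminus_0_l, cosK_opp, cosK_0. ring_simplify. lra. }
  destruct (classic (B = Q)) as [<- | HBQ].
  { unfold quad_defect. rewrite metric_self, Rminus_0_r, cosK_0. ring_simplify. lra. }
  destruct (quad_denominator_pos A P B Q HAP HBQ) as (Ha & Hx & Hy).
  specialize (Hlo A P B Q (admissible_of_neq A P B Q HAP HBQ)).
  rewrite cosq_quad_defect_sub in Hlo by lra.
  set (u := sgnK K * _) in *. set (D := _ * _ * _) in *.
  assert (0 < D) by (unfold D; repeat apply Rmult_lt_0_compat; assumption).
  assert (u = u / D * D) by (field; lra). nra.
Qed.

Section Configuration.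

Variables (A B A' B' P Q : M) (t e R0 : R).
Hypothesis t_range : 1 / 2 <= t <= 1.
Hypothesis P_at : at_fraction rho A B t P.
Hypothesis Q_at : at_fraction rho A' B' t Q.
Hypothesis e_bound : rho A A' + rho B B' <= e.
Hypothesis R0_bound : rho A B + rho A' B' + 2 * e <= R0.

Local Notation x := (t * rho A B).
Local Notation y := ((1 - t) * rho A' B').
Local Notation expR0 := (exp (kappa * R0)).
Local Notation m := (kappa * expR0 * (2 * e)).

Lemma config_e_nonneg : 0 <= e.
Proof. pose proof (proj1 rho_metric A A'). pose proof (proj1 rho_metric B B'). lra. Qed.

Lemma config_one_le_expR0 : 1 <= expR0.
Proof.
  pose proof (exp_ineq1_le (kappa * R0)). pose proof (sqrt_pos (Rabs K)).
  pose proof (proj1 rho_metric A B). pose proof (proj1 rho_metric A' B'). pose proof config_e_nonneg.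
  nra.
Qed.

Lemma config_cosK_bound (u : R) : 0 <= u <= R0 -> Rabs (cosK K u) <= expR0.
Proof. intros Hu. apply Rabs_cosK_le. rewrite Rabs_pos_eq; lra. Qed.

Lemma config_cosK_close (u v : R) : 0 <= u <= R0 -> 0 <= v <= R0 -> Rabs (u - v) <= 2 * e ->
  Rabs (cosK K u - cosK K v) <= m.
Proof.
  intros Hu Hv Huv. eapply Rle_trans.
  - apply (Rabs_cosK_sub_le K R0); rewrite Rabs_pos_eq; lra.
  - pose proof (kappa_pos K K_neq0). pose proof (exp_pos (kappa * R0)).
    apply Rmult_le_compat_l; nra.
Qed.

Lemma config_dist_ranges :
  0 <= x <= R0 /\ 0 <= y <= R0 /\ 0 <= x + y <= R0 /\ Rabs (x - y) <= R0 /\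
  0 <= rho A Q <= R0 /\ 0 <= rho P B' <= R0 /\ 0 <= rho A B' <= R0 /\ 0 <= rho P Q <= R0.
Proof.
  destruct (at_fraction_deviation rho A B A' B' P Q t e rho_metric ltac:(lra) P_at Q_at e_bound)
    as (Da%Rabs_le_inv & Db%Rabs_le_inv & Df%Rabs_le_inv).
  pose proof rho_metric as (Hpos & _ & Hsym & Htri).
  pose proof (Hpos A B). pose proof (Hpos A' B'). pose proof (Hpos A Q).
  pose proof (Hpos P B'). pose proof (Hpos A B'). pose proof (Hpos P Q). pose proof config_e_nonneg.
  pose proof (Htri P A' Q) as T1. pose proof (Htri P A A') as T2. rewrite (Hsym P A), (proj1 P_at) in T2.
  rewrite (proj1 Q_at) in T1. pose proof (Hpos B B').
  repeat split; try apply Rabs_le; try split; nra.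
Qed.

Lemma config_cosK_factor_bounds : 1 / 2 <= cosK K y /\ 0 <= cosK K (x + y).
Proof.
  pose proof (proj1 rho_metric A B). pose proof (proj1 rho_metric A' B'). split.
  - apply cosK_ge_half; [nra |]. intros HK.
    pose proof (kappa_dist_le A' B' HK). pose proof PI_RGT_0. nra.
  - apply cosK_nonneg; [nra |]. intros HK.
    pose proof (kappa_dist_le A B HK). pose proof (kappa_dist_le A' B' HK). nra.
Qed.

Lemma versK_le_of_upper_cosq : upper_cosq rho K ->
  versK K (rho P Q) <= 32 * kappa * expR0 ^ 2 * e.
Proof.
  intros Hup.
  destruct (at_fraction_deviation rho A B A' B' P Q t e rho_metric ltac:(lra) P_at Q_at e_bound)
    as (Da & Db & Df).
  destruct config_dist_ranges as (Rx & Ry & Rxy & _ & Ra & Rb & Rf & Rd).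
  destruct config_cosK_factor_bounds as [Hcy Hcxy].
  pose proof (upper_cosq_quad_defect A P Q B' Hup) as Hq.
  rewrite (proj1 P_at), (proj2 Q_at) in Hq.
  pose proof (quad_defect_perturb (cosK K) (x + y) x y (rho A Q) (rho P B') (rho P Q) (rho A B')
    x y (rho P Q) (x + y) expR0 m config_one_le_expR0
    (config_cosK_bound _ Rxy) (config_cosK_bound _ Rx) (config_cosK_bound _ Ry)
    (config_cosK_bound _ Ra) (config_cosK_bound _ Ry) (config_cosK_bound _ Rd) (config_cosK_bound _ Rf)
    (config_cosK_close _ _ Ra Rx Da) (config_cosK_close _ _ Rb Ry Db)
    (config_cosK_close _ _ Rd Rd ltac:(rewrite Rminus_diag, Rabs_R0; pose proof config_e_nonneg; lra))
    (config_cosK_close _ _ Rf Rxy Df)) as Hp.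
  rewrite quad_defect_upper_model, Rabs_minus_sym in Hp.
  pose proof (sgnK_mul_le_Rabs K ((1 - cosK K (rho P Q)) * (cosK K y + cosK K (x + y))
    - quad_defect (cosK K) (x + y) x y (rho A Q) (rho P B') (rho P Q) (rho A B'))).
  assert (Hmodel : versK K (rho P Q) * (cosK K y + cosK K (x + y)) <= 8 * expR0 * m)
    by (unfold versK; nra).
  pose proof (versK_nonneg K (rho P Q)). nra.
Qed.

Lemma versK_le_of_lower_cosq : lower_cosq rho K ->
  versK K (rho P Q) <= 32 * kappa * expR0 ^ 2 * e.
Proof.
  intros Hlo.
  destruct (at_fraction_deviation rho A B A' B' P Q t e rho_metric ltac:(lra) P_at Q_at e_bound)
    as (Da & Db & Df).
  destruct config_dist_ranges as (Rx & Ry & Rxy & Rx_y & Ra & Rb & Rf & Rd).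
  destruct config_cosK_factor_bounds as [_ Hcxy].
  pose proof (lower_cosq_quad_defect A P B' Q Hlo) as Hq.
  rewrite (proj1 P_at), (metric_sym B' Q), (proj2 Q_at) in Hq.
  pose proof (quad_defect_perturb (cosK K) (x - y) x y (rho A B') (rho P Q) (rho P B') (rho A Q)
    (x + y) (rho P Q) y x expR0 m config_one_le_expR0
    (Rabs_cosK_le K R0 _ Rx_y) (config_cosK_bound _ Rx) (config_cosK_bound _ Ry)
    (config_cosK_bound _ Rf) (config_cosK_bound _ Rd) (config_cosK_bound _ Ry) (config_cosK_bound _ Ra)
    (config_cosK_close _ _ Rf Rxy Df)
    (config_cosK_close _ _ Rd Rd ltac:(rewrite Rminus_diag, Rabs_R0; pose proof config_e_nonneg; lra))
    (config_cosK_close _ _ Rb Ry Db) (config_cosK_close _ _ Ra Rx Da)) as Hp.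
  rewrite quad_defect_lower_model in Hp by auto using cosK_sub_add_sum, cosK_sub_add_mul.
  pose proof (sgnK_mul_le_Rabs K (quad_defect (cosK K) (x - y) x y (rho A B') (rho P Q) (rho P B') (rho A Q)
    - (cosK K (rho P Q) - 1) * (1 + cosK K (x + y)))).
  assert (Hmodel : versK K (rho P Q) * (1 + cosK K (x + y)) <= 8 * expR0 * m)
    by (unfold versK; nra).
  pose proof (versK_nonneg K (rho P Q)). pose proof (kappa_pos K K_neq0).
  pose proof config_e_nonneg. pose proof config_one_le_expR0. nra.
Qed.

End Configuration.

Hypothesis cosq_condition : one_sided_cosq rho K.

Lemma versK_at_fraction_le_half (A B A' B' P Q : M) (t e R0 : R) :
  1 / 2 <= t <= 1 -> at_fraction rho A B t P -> at_fraction rho A' B' t Q ->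
  rho A A' + rho B B' <= e -> rho A B + rho A' B' + 2 * e <= R0 ->
  versK K (rho P Q) <= 32 * kappa * exp (kappa * R0) ^ 2 * e.
Proof.
  intros. destruct cosq_condition;
    [apply versK_le_of_upper_cosq with A B A' B' t | apply versK_le_of_lower_cosq with A B A' B' t];
    assumption.
Qed.

(* The case t < 1/2 reduces to the case 1 - t >= 1/2 by reversing both segments. *)
Lemma versK_at_fraction_le (A B A' B' P Q : M) (t e R0 : R) :
  0 <= t <= 1 -> at_fraction rho A B t P -> at_fraction rho A' B' t Q ->
  rho A A' + rho B B' <= e -> rho A B + rho A' B' + 2 * e <= R0 ->
  versK K (rho P Q) <= 32 * kappa * exp (kappa * R0) ^ 2 * e.
Proof.
  intros Ht HP HQ He HR. destruct (Rle_dec (1 / 2) t).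
  - apply (versK_at_fraction_le_half A B A' B' P Q t); auto. lra.
  - apply (versK_at_fraction_le_half B A B' A' P Q (1 - t)); try apply at_fraction_sym; auto; try lra.
    rewrite (metric_sym B), (metric_sym B'). lra.
Qed.

End FourPointCondition.

Lemma conv_to_dist_sum_lt {M : Type} (rho : M -> M -> R) (A B : M) (An Bn : nat -> M) :
  is_metric rho -> conv_to rho An A -> conv_to rho Bn B ->
  forall xi, 0 < xi -> exists N, forall n, (N <= n)%nat -> rho A (An n) + rho B (Bn n) < xi.
Proof.
  intros (_ & _ & Hsym & _) HA HB xi Hxi.
  destruct (HA (xi / 2) ltac:(lra)) as [NA HNA]. destruct (HB (xi / 2) ltac:(lra)) as [NB HNB].
  exists (NA + NB)%nat. intros n Hn.
  specialize (HNA n ltac:(lia)). specialize (HNB n ltac:(lia)).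
  rewrite (Hsym A), (Hsym B). lra.
Qed.

Theorem lemma6p1 (M : Type) (rho : M -> M -> R) (K : R)
  (Hmet : is_metric rho) (HK : K <> 0)
  (Hdiam : 0 < K -> forall x y : M, rho x y <= PI / (2 * sqrt K))
  (Hcosq : one_sided_cosq rho K)
  (A B : M) (An Bn : nat -> M) (g gr : R -> M) (gn grn : nat -> R -> M)
  (Hg : is_shortest rho g A B)
  (Hgn : forall n, is_shortest rho (gn n) (An n) (Bn n))
  (HA : conv_to rho An A) (HB : conv_to rho Bn B)
  (Hgr : is_reduced_param rho g gr)
  (Hgrn : forall n, is_reduced_param rho (gn n) (grn n)) :
  forall eps, 0 < eps -> exists N, forall n, (N <= n)%nat ->
    forall t, 0 <= t <= 1 -> rho (grn n t) (gr t) < eps.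
Proof.
  intros eps Heps.
  destruct (versK_small_inv K HK eps Heps) as (eta & Heta & Hsmall).
  pose proof (kappa_pos K HK) as Hk.
  set (R0 := 2 * rho A B + 4). set (C := 32 * sqrt (Rabs K) * exp (sqrt (Rabs K) * R0) ^ 2).
  assert (HC : 0 < C) by (apply Rmult_lt_0_compat; [lra | apply pow_lt, exp_pos]).
  destruct (conv_to_dist_sum_lt rho A B An Bn Hmet HA HB (Rmin 1 (eta / C))) as [N HN].
  { apply Rmin_glb_lt; [lra | apply Rdiv_lt_0_compat; lra]. }
  exists N. intros n Hn t Ht.
  specialize (HN n Hn). set (e := rho A (An n) + rho B (Bn n)) in *.
  pose proof (Rmin_l 1 (eta / C)). pose proof (Rmin_r 1 (eta / C)).
  assert (HR : rho A B + rho (An n) (Bn n) + 2 * e <= R0).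
  { pose proof Hmet as (_ & _ & Hsym & Htri).
    pose proof (Htri (An n) A (Bn n)). pose proof (Htri A B (Bn n)).
    rewrite (Hsym (An n) A) in *. unfold e, R0 in *. lra. }
  pose proof (versK_at_fraction_le M rho K Hmet Hdiam HK Hcosq A B (An n) (Bn n) (gr t) (grn n t) t e R0 Ht
    (reduced_param_at_fraction rho g gr A B t Hmet Hg Hgr Ht)
    (reduced_param_at_fraction rho (gn n) (grn n) (An n) (Bn n) t Hmet (Hgn n) (Hgrn n) Ht)
    (Rle_refl e) HR) as Hv. fold C in Hv.
  rewrite (metric_sym M rho Hmet). apply Hsmall.
  - apply Hmet.
  - intros HKp. left. apply (kappa_dist_lt_PI M rho K Hdiam), HKp.
  - enough (C * e < eta) by lra.
    replace eta with (C * (eta / C)) by (field; lra). apply Rmult_lt_compat_l; lra.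
Qed.
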